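(* For $n\ge1$, $$b_n(1;t,1,1)=\sum_{k=0}^{n-1}c(n,k+1)t^k\quad\text{and}\quad b_n(1;1,1,t)=b_n(1;t,t,1)=\sum_{k=0}^{n-1}e(n,k)t^k.$$ That is, the number of inversion sequences of length $n$ with exactly $k$ levels equals $c(n,k+1)$, and the number with exactly $k$ ascents, as well as the number with exactly $k$ indices that are levels or descents, equals $e(n,k)$.
   Context: An inversion sequence of length $n$ is a sequence $\rho=\rho_1\cdots\rho_n$ of integers with $1\le \rho_i\le i$ for all $i$; $I_n$ is the set of them. A level, descent, or ascent of $\rho$ is an index $i\in[n-1]$ with $\rho_i=\rho_{i+1}$, $\rho_i>\rho_{i+1}$, or $\rho_i<\rho_{i+1}$, respectively. Define $b_n(1;p,q,r)=\sum_{\rho\in I_n}p^{\mathrm{lev}(\rho)}q^{\mathrm{des}(\rho)}r^{\mathrm{asc}(\rho)}$. Here $c(n,k)$ is the signless Stirling number of the first kind (number of permutations of $[n]$ with $k$ cycles) and $e(n,k)$ is the Eulerian number (number of permutations of $[n]$ with $k$ ascents). *)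

From mathcomp Require Import all_boot all_order all_algebra all_fingroup.
Set Implicit Arguments. Unset Strict Implicit. Unset Printing Implicit Defensive.
Import GRing.Theory.
Local Open Scope ring_scope.

(* An inversion sequence of length n: rho_1 ... rho_n with 1 <= rho_i <= i.
   We index positions by i : 'I_n (0-based), so position i corresponds to the
   paper's index i+1 and the condition reads 1 <= rho i <= i+1.
   Values are stored in 'I_n.+1 (i.e. 0..n). *)
Definition is_inv_seq (n : nat) (rho : {ffun 'I_n -> 'I_n.+1}) : bool :=
  [forall i : 'I_n, (0 < rho i)%N && (rho i <= i.+1)%N].

Definition inv_vals (n : nat) (rho : {ffun 'I_n -> 'I_n.+1}) : seq nat :=
  [seq (rho i : nat) | i <- enum 'I_n].

Definition consec_count (r : rel nat) (s : seq nat) : nat :=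
  count (fun p : nat * nat => r p.1 p.2) (zip s (behead s)).

Definition lev (n : nat) (rho : {ffun 'I_n -> 'I_n.+1}) : nat :=
  consec_count (fun a b => a == b) (inv_vals rho).
Definition des (n : nat) (rho : {ffun 'I_n -> 'I_n.+1}) : nat :=
  consec_count (fun a b => b < a)%N (inv_vals rho).
Definition asc (n : nat) (rho : {ffun 'I_n -> 'I_n.+1}) : nat :=
  consec_count (fun a b => a < b)%N (inv_vals rho).

Definition bn (R : comNzRingType) (n : nat) (p q r : R) : R :=
  \sum_(rho : {ffun 'I_n -> 'I_n.+1} | is_inv_seq rho)
     p ^+ lev rho * q ^+ des rho * r ^+ asc rho.

Definition stirling1 (n k : nat) : nat :=
  #|[set s : 'S_n | #|porbits s| == k]|.

Definition perm_asc (n : nat) (s : 'S_n) : nat :=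
  consec_count (fun a b => a < b)%N [seq (s i : nat) | i <- enum 'I_n].
Definition eulerian (n k : nat) : nat :=
  #|[set s : 'S_n | perm_asc s == k]|.

(* Permutations of [n+1] and inversion sequences of length n+1 both arise from
   the objects of size n by n+1 choices.  An inversion sequence is extended by
   appending a last entry a in [1, n+1]; a permutation either by appending a
   new last value j and shifting the old values >= j up, or by fixing the new
   point and composing with the transposition (new point, j), which creates a
   cycle iff j is the new point.  Appending creates a level iff a equals the
   previous last entry, so levels have generating function (x+1)...(x+n-1),
   while cycles have x(x+1)...(x+n-1): this is Stirling's generating function.
   Shifting preserves comparisons, and b shifted is less than j iff b+1 is
   less than j+1, while it exceeds j iff b+1 >= j+1.  Hence ascents (resp.
   descents) of permutations and ascents (resp. levels-or-descents) of
   inversion sequences satisfy the same recursion once refined by the last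
   letter.  Complementing values swaps ascents and descents of permutations. *)

From mathcomp Require Import all_boot all_order all_algebra all_fingroup.
From mathcomp Require Import zify.
Import GRing.Theory.

Lemma consec_count_cons2 r x y s :
  consec_count r [:: x, y & s] = r x y + consec_count r (y :: s).
Proof. by []. Qed.

Lemma consec_count_rcons r s y a : s != [::] ->
  consec_count r (rcons s a) = consec_count r s + r (last y s) a.
Proof.
elim: s => // x [|x' s] IHs _; first by rewrite addnC.
by rewrite rcons_cons !consec_count_cons2 IHs // addnA.
Qed.

Lemma consec_count_map (f : nat -> nat) r s :
  consec_count r (map f s) = consec_count (fun a b => r (f a) (f b)) s.
Proof. by elim: s => // x [|y s] IHs //; rewrite !consec_count_cons2 -IHs. Qed.

Lemma eq_in_consec_count r r' s : {in s &, r =2 r'} ->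
  consec_count r s = consec_count r' s.
Proof.
elim: s => // x [|y s] IHs // eq_rr'.
rewrite !consec_count_cons2 eq_rr' ?mem_head ?inE ?eqxx ?orbT //.
by rewrite IHs // => a b sa sb; apply: eq_rr'; rewrite inE ?sa ?sb orbT.
Qed.

Lemma consec_countU r1 r2 s : (forall a b, ~~ (r1 a b && r2 a b)) ->
  consec_count r1 s + consec_count r2 s
  = consec_count (fun a b => r1 a b || r2 a b) s.
Proof.
move=> r12; rewrite /consec_count -count_predUI -[RHS]addn0; congr (_ + _).
apply/eqP; rewrite -leqn0 leqNgt -has_count.
by apply/hasPn => -[a b] _; apply: r12.
Qed.

Lemma consec_count_le r s : consec_count r s <= (size s).-1.
Proof.
by rewrite (leq_trans (count_size _ _)) // size_zip size_behead geq_minr.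
Qed.

Fixpoint invseqs (n : nat) : seq (seq nat) :=
  if n is m.+1 then [seq rcons v a | v <- invseqs m, a <- iota 1 m.+1]
  else [:: [::]].

Lemma mem_invseqs n v : v \in invseqs n <->
  size v = n /\ (forall i, i < n -> 0 < nth 0 v i <= i.+1).
Proof.
elim: n v => [|n IHn] v.
  by rewrite inE; split=> [/eqP -> //|[/size0nil ->]].
split.
  case/allpairsP=> -[w a] [/IHn[size_w w_bnd]].
  rewrite mem_iota add1n => a_bnd ->.
  rewrite size_rcons size_w; split=> // i lt_i_Sn; rewrite nth_rcons size_w.
  have [lt_in|le_ni] := ltnP i n; first exact: w_bnd.
  have -> : i = n by lia.
  by rewrite eqxx.
case/lastP: v => [[] //|w a]; rewrite size_rcons => -[[size_w] v_bnd].
apply: allpairs_f.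
  apply/IHn; split=> // i lt_in.
  by have := v_bnd i (ltnW lt_in); rewrite nth_rcons size_w lt_in.
have := v_bnd n (ltnSn n).
by rewrite nth_rcons size_w ltnn eqxx mem_iota add1n ltnS.
Qed.

Lemma uniq_invseqs n : uniq (invseqs n).
Proof.
elim: n => // n IHn; apply: allpairs_uniq => //; first exact: iota_uniq.
by move=> [w a] [w' b] _ _ /= /rcons_inj[-> ->].
Qed.

Lemma last_invseqs n v :
  v \in invseqs n.+1 -> v != [::] /\ 0 < last 0 v <= n.+1.
Proof.
case/mem_invseqs=> size_v v_bnd; split; first by rewrite -size_eq0 size_v.
by rewrite -nth_last size_v; apply: v_bnd.
Qed.

Lemma sum_invseqsS (R : nmodType) n (F : seq nat -> R) :
  (\sum_(v <- invseqs n.+1) F v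
   = \sum_(v <- invseqs n) \sum_(a <- iota 1 n.+1) F (rcons v a))%R.
Proof. exact: big_allpairs_dep. Qed.

Lemma size_inv_vals {n} (rho : {ffun 'I_n -> 'I_n.+1}) :
  size (inv_vals rho) = n.
Proof. by rewrite size_map size_enum_ord. Qed.

Lemma nth_inv_vals {n} (rho : {ffun 'I_n -> 'I_n.+1}) (i : 'I_n) :
  nth 0 (inv_vals rho) i = rho i.
Proof. by rewrite (nth_map i) ?size_enum_ord // nth_ord_enum. Qed.

Lemma inv_vals_inj n : injective (@inv_vals n).
Proof.
move=> rho rho' eq_vals; apply/ffunP=> i; apply: val_inj.
by rewrite /= -!nth_inv_vals eq_vals.
Qed.

Lemma invseqsP n v :
  reflect (exists2 rho : {ffun 'I_n -> 'I_n.+1},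
             is_inv_seq rho & v = inv_vals rho)
          (v \in invseqs n).
Proof.
apply: (iffP idP) => [/mem_invseqs[size_v v_bnd]|[rho /forallP rho_bnd ->]].
  have lt_v (i : 'I_n) : nth 0 v i < n.+1.
    by case/andP: (v_bnd i (ltn_ord i)) => _ /leq_trans; apply.
  exists [ffun i => Ordinal (lt_v i)].
    by apply/forallP=> i; rewrite ffunE v_bnd.
  apply: (@eq_from_nth _ 0) => [|i]; rewrite size_v ?size_inv_vals // => lt_in.
  by rewrite (nth_inv_vals _ (Ordinal lt_in)) ffunE.
apply/mem_invseqs; rewrite size_inv_vals; split=> // i lt_in.
by rewrite (nth_inv_vals _ (Ordinal lt_in)); apply: rho_bnd.
Qed.

Lemma sum_is_inv_seq (R : nmodType) n (F : seq nat -> R) :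
  (\sum_(rho : {ffun 'I_n -> 'I_n.+1} | is_inv_seq rho) F (inv_vals rho)
   = \sum_(v <- invseqs n) F v)%R.
Proof.
rewrite -(big_image _ _ (@inv_vals n)); apply/perm_big/uniq_perm.
- by rewrite map_inj_uniq ?enum_uniq //; apply: inv_vals_inj.
- exact: uniq_invseqs.
by move=> v; apply/imageP/invseqsP.
Qed.

Definition perm_vals {n} (s : 'S_n) : seq nat :=
  [seq (s i : nat) | i <- enum 'I_n].

Lemma size_perm_vals n (s : 'S_n) : size (perm_vals s) = n.
Proof. by rewrite size_map size_enum_ord. Qed.

Lemma last_perm_vals n y (s : 'S_n.+1) : last y (perm_vals s) = s ord_max.
Proof. by rewrite /perm_vals enum_ordSr map_rcons last_rcons. Qed.

Lemma perm_vals_lift n (s : 'S_n) (j : 'I_n.+1) :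
  perm_vals (lift_perm ord_max j s) = rcons (map (bump j) (perm_vals s)) j.
Proof.
rewrite /perm_vals enum_ordSr map_rcons lift_perm_id -!map_comp; congr rcons.
apply: eq_map => i /=.
have -> : widen_ord (leqnSn n) i = lift ord_max i.
  by apply: val_inj; rewrite /= /bump leqNgt ltn_ord.
by rewrite lift_perm_lift.
Qed.

Lemma reindex_permS {R : nmodType} {n} {h : 'S_n * 'I_n.+1 -> 'S_n.+1}
    (F : 'S_n.+1 -> R) :
  injective h ->
  (\sum_(s : 'S_n.+1) F s = \sum_(s : 'S_n) \sum_(j : 'I_n.+1) F (h (s, j)))%R.
Proof.
move=> h_inj; have h_bij : bijective h.
  by apply: inj_card_bij; rewrite // card_prod !card_Sn card_ord factS mulnC.
by rewrite (reindex h (onW_bij _ h_bij)) pair_big; apply: eq_bigr => -[].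
Qed.

Lemma lift_perm_pair_inj {n} (i : 'I_n.+1) :
  injective (fun p : 'S_n * 'I_n.+1 => lift_perm i p.2 p.1).
Proof.
move=> [s j] [t k] /= eq_st.
have eq_jk : j = k by rewrite -(lift_perm_id i j s) eq_st lift_perm_id.
subst k; congr (_, _); apply/permP => x; apply: (@lift_inj _ j).
by rewrite -!(lift_perm_lift i) eq_st.
Qed.

Lemma tperm_lift_perm_pair_inj {n} (i : 'I_n.+1) :
  injective (fun p : 'S_n * 'I_n.+1 => tperm i p.2 * lift_perm i i p.1)%g.
Proof.
move=> [s j] [t k] /= eq_st.
have maps_to_i (u : 'S_n) l : (tperm i l * lift_perm i i u)%g l = i.
  by rewrite permM tpermR lift_perm_id.
have eq_jk : j = k.
  apply: (@perm_inj _ (tperm i k * lift_perm i i t)%g).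
  by rewrite -{1}eq_st !maps_to_i.
move: eq_st; rewrite -eq_jk => /mulgI.
by move=> /(@lift_perm_pair_inj _ i (s, i) (t, i))[->].
Qed.

Lemma lift_permX n (i : 'I_n.+1) (s : 'S_n) k :
  (lift_perm i i s ^+ k)%g = lift_perm i i (s ^+ k)%g.
Proof.
elim: k => [|k IHk]; first by rewrite !expg0 lift_perm1.
by rewrite !expgSr IHk lift_permM.
Qed.

Lemma porbit_lift_perm n (i : 'I_n.+1) (s : 'S_n) x :
  porbit (lift_perm i i s) (lift i x) = lift i @: porbit s x.
Proof.
apply/setP => y; apply/porbitP/imsetP => [[k ->]|[z /porbitP[k ->] ->]].
  by exists ((s ^+ k)%g x); rewrite ?mem_porbit // lift_permX lift_perm_lift.
by exists k; rewrite lift_permX lift_perm_lift.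
Qed.

Lemma porbit_lift_perm_id n (i : 'I_n.+1) (s : 'S_n) :
  porbit (lift_perm i i s) i = [set i].
Proof.
apply/setP => y; rewrite inE; apply/porbitP/eqP => [[k ->]|->].
  by rewrite permX_fix // lift_perm_id.
by exists 0; rewrite expg0 perm1.
Qed.

Lemma card_porbits_lift_perm n (i : 'I_n.+1) (s : 'S_n) :
  #|porbits (lift_perm i i s)| = #|porbits s|.+1.
Proof.
pose liftA (A : {set 'I_n}) := lift i @: A.
have -> : porbits (lift_perm i i s) = [set i] |: liftA @: porbits s.
  apply/setP => C; rewrite !inE; apply/imsetP/orP.
    case=> y _ ->; case: (unliftP i y) => [x|] ->.
      by right; rewrite porbit_lift_perm; apply/imset_f/imset_f.
    by left; rewrite porbit_lift_perm_id.
  case=> [/eqP ->|/imsetP[A /imsetP[x _ ->] ->]].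
    by exists i; rewrite ?porbit_lift_perm_id.
  by exists (lift i x); rewrite ?porbit_lift_perm.
rewrite cardsU1 card_imset; last exact/imset_inj/lift_inj.
suff -> : [set i] \notin liftA @: porbits s by [].
apply/imsetP => -[A _]; rewrite /liftA => eq_iA.
have /imsetP[y _ /eqP] : i \in lift i @: A by rewrite -eq_iA set11.
by rewrite (negbTE (neq_lift i y)).
Qed.

Lemma card_porbits_tperm_lift_perm n (i j : 'I_n.+1) (s : 'S_n) :
  #|porbits (tperm i j * lift_perm i i s)%g| = #|porbits s| + (i == j).
Proof.
have := porbits_mul_tperm (lift_perm i i s) i j.
rewrite card_porbits_lift_perm /=.
have [->|ne_ij] := eqVneq i j; first by rewrite porbit_id /=; lia.
by rewrite porbit_sym porbit_lift_perm_id inE eq_sym ne_ij /=; lia.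
Qed.

Local Open Scope ring_scope.

Section GeneratingFunctions.

Variables (R : comPzSemiRingType) (x : R).

Lemma sum_expr_eq (T : eqType) (s : seq T) (l : T) : uniq s -> l \in s ->
  \sum_(a <- s) x ^+ (l == a) = x + (size s).-1%:R.
Proof.
move=> s_uniq s_l; rewrite (bigD1_seq l) //= eqxx expr1; congr (_ + _).
rewrite (eq_bigr (fun _ => 1%:R)) => [|a]; last by rewrite eq_sym => /negbTE->.
by rewrite -natr_sum sum1_count -(count_predC (pred1 l)) count_uniq_mem // s_l.
Qed.

Lemma cycle_gf n : \sum_(s : 'S_n) x ^+ #|porbits s| = \prod_(i < n) (x + i%:R).
Proof.
elim: n => [|n IHn].
  rewrite big_ord0 (big_pred1 1%g) => [|s]; last by rewrite /= [s]permS0 eqxx.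
  have /eqP-> : #|porbits (1%g : 'S_0)| == 0%N.
    by rewrite -leqn0 (leq_trans (leq_imset_card _ _)) ?card_ord.
  by rewrite expr0.
rewrite (reindex_permS _ (tperm_lift_perm_pair_inj ord_max)).
rewrite big_ord_recr [RHS]/= -IHn mulr_suml; apply: eq_bigr => s _ /=.
under eq_bigr do rewrite card_porbits_tperm_lift_perm exprD.
rewrite -mulr_sumr -big_enum sum_expr_eq ?enum_uniq ?mem_enum //.
by rewrite -cardE card_ord.
Qed.

Lemma level_gf n :
  \sum_(v <- invseqs n.+1) x ^+ consec_count eq_op v
  = \prod_(i < n) (x + i.+1%:R).
Proof.
elim: n => [|n IHn]; first by rewrite big_ord0 /= big_seq1.
rewrite sum_invseqsS big_ord_recr [RHS]/= -IHn mulr_suml.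
apply: eq_big_seq => v /last_invseqs[v_nil v_last].
under eq_bigr do rewrite (consec_count_rcons _ _ 0) // exprD.
rewrite -mulr_sumr sum_expr_eq ?iota_uniq ?size_iota // mem_iota add1n ltnS.
by case/andP: v_last => -> /leqW->.
Qed.

Section LastLetterTransfer.

(* Permutation values are 0-based while inversion-sequence entries are
   1-based, whence the shifts by one below. *)

Variables r r' : rel nat.
Hypothesis r_bump : forall j a b, r (bump j a) (bump j b) = r a b.
Hypothesis r_new_last : forall j a, r (bump j a) j = r' a.+1 j.+1.

Definition perm_last_gf n (G : nat -> R) :=
  \sum_(s : 'S_n.+1) x ^+ consec_count r (perm_vals s) * G (s ord_max).+1.

Definition invseq_last_gf n (G : nat -> R) :=
  \sum_(v <- invseqs n.+1) x ^+ consec_count r' v * G (last 0%N v).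

Lemma perm_last_gfS n G :
  perm_last_gf n.+1 G
  = perm_last_gf n (fun l => \sum_(j < n.+2) x ^+ r' l j.+1 * G j.+1).
Proof.
rewrite /perm_last_gf (reindex_permS _ (lift_perm_pair_inj ord_max)).
apply: eq_bigr => s _; rewrite mulr_sumr; apply: eq_bigr => j _ /=.
have vals_nil : map (bump j) (perm_vals s) != [::].
  by rewrite -size_eq0 size_map size_perm_vals.
rewrite perm_vals_lift lift_perm_id (consec_count_rcons _ _ (bump j 0)) //.
rewrite last_map last_perm_vals r_new_last consec_count_map.
by rewrite (eq_in_consec_count _ r) ?exprD ?mulrA // => a b _ _; apply: r_bump.
Qed.

Lemma invseq_last_gfS n G :
  invseq_last_gf n.+1 G
  = invseq_last_gf n (fun l => \sum_(j < n.+2) x ^+ r' l j.+1 * G j.+1).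
Proof.
rewrite /invseq_last_gf sum_invseqsS.
apply: eq_big_seq => v /last_invseqs[v_nil _].
rewrite -[iota 1 _]/(index_iota 1 n.+3) big_add1 big_mkord mulr_sumr.
apply: eq_bigr => j _.
by rewrite (consec_count_rcons _ _ 0) // last_rcons exprD mulrA.
Qed.

Lemma perm_last_gfE n G : perm_last_gf n G = invseq_last_gf n G.
Proof.
elim: n G => [|n IHn] G; last by rewrite perm_last_gfS invseq_last_gfS IHn.
rewrite /perm_last_gf /invseq_last_gf big_seq1.
rewrite (big_pred1 1%g) => [|s]; last by rewrite /= [s]permS1 eqxx.
have /eqP-> : consec_count r (perm_vals (1%g : 'S_1)) == 0%N.
  by rewrite -leqn0 (leq_trans (consec_count_le _ _)) // size_perm_vals.
by rewrite perm1.
Qed.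

Lemma sum_perm_consec_count_invseqs n :
  \sum_(s : 'S_n.+1) x ^+ consec_count r (perm_vals s)
  = \sum_(v <- invseqs n.+1) x ^+ consec_count r' v.
Proof.
have := perm_last_gfE n (fun=> 1); rewrite /perm_last_gf /invseq_last_gf.
by under eq_bigr do rewrite mulr1; under [in RHS]eq_bigr do rewrite mulr1.
Qed.

End LastLetterTransfer.

Lemma ltn_bump2 j a b : (bump j a < bump j b)%N = (a < b)%N.
Proof. by rewrite !ltnNge leq_bump2. Qed.

Lemma perm_asc_gf n :
  \sum_(s : 'S_n.+1) x ^+ perm_asc s
  = \sum_(v <- invseqs n.+1) x ^+ consec_count (fun a b => a < b)%N v.
Proof.
apply: sum_perm_consec_count_invseqs => [j a b|j a]; first exact: ltn_bump2.
by rewrite /bump; case: leqP; lia.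
Qed.

Lemma perm_des_gf n :
  \sum_(s : 'S_n.+1) x ^+ consec_count (fun a b => b < a)%N (perm_vals s)
  = \sum_(v <- invseqs n.+1) x ^+ consec_count (fun a b => b <= a)%N v.
Proof.
apply: sum_perm_consec_count_invseqs => [j a b|j a]; first exact: ltn_bump2.
by rewrite /bump; case: leqP; lia.
Qed.

Lemma perm_asc_des_gf n :
  \sum_(s : 'S_n) x ^+ consec_count (fun a b => a < b)%N (perm_vals s)
  = \sum_(s : 'S_n) x ^+ consec_count (fun a b => b < a)%N (perm_vals s).
Proof.
rewrite (reindex_inj (mulIg (perm (@rev_ord_inj n)))); apply: eq_bigr => s _.
have -> : perm_vals (s * perm (@rev_ord_inj n))%g
          = map (fun a => n - a.+1)%N (perm_vals s).
  by rewrite /perm_vals -map_comp; apply: eq_map => i; rewrite /= permM permE.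
rewrite consec_count_map; congr (_ ^+ _); apply: eq_in_consec_count => a b.
move=> /mapP[i _ ->] /mapP[k _ ->].
have := ltn_ord (s i); have := ltn_ord (s k).
by move: (s i : nat) (s k : nat) => u w ? ?; apply/idP/idP; lia.
Qed.

End GeneratingFunctions.

Lemma sum_card_scale_Xn (R : nzRingType) (I : finType) (f : I -> nat) n :
  (forall i, f i < n)%N ->
  \sum_(k < n) #|[set i | f i == k]|%:R *: 'X^k = \sum_i 'X^(f i) :> {poly R}.
Proof.
move=> lt_f_n; rewrite (partition_big (fun i => Ordinal (lt_f_n i)) xpredT) //=.
apply: eq_bigr => k _; rewrite scaler_nat -sumr_const.
by apply: eq_big => [i|i]; rewrite inE // => /eqP->.
Qed.

Lemma stirling1_gf (R : comNzRingType) n :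
  \sum_(k < n.+1) (stirling1 n k)%:R *: 'X^k
  = \prod_(i < n) ('X + i%:R) :> {poly R}.
Proof.
rewrite -cycle_gf; apply: sum_card_scale_Xn => s.
by rewrite ltnS (leq_trans (leq_imset_card _ _)) ?card_ord.
Qed.

Lemma stirling1_n0 n : stirling1 n.+1 0 = 0%N.
Proof.
apply/eqP; rewrite cards_eq0; apply/eqP/setP => s; rewrite !inE cards_eq0.
by apply/negbTE/set0Pn; exists (porbit s ord0); apply: imset_f.
Qed.

Lemma stirling1S_gf (R : idomainType) n :
  \sum_(k < n.+1) (stirling1 n.+1 k.+1)%:R *: 'X^k
  = \prod_(i < n) ('X + i.+1%:R) :> {poly R}.
Proof.
apply: (@mulfI _ 'X); first by rewrite polyX_eq0.
transitivity (\prod_(i < n.+1) ('X + i%:R) : {poly R}); last first.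
  by rewrite big_ord_recl addr0.
rewrite -stirling1_gf [RHS]big_ord_recl /= stirling1_n0 scale0r add0r mulr_sumr.
by apply: eq_bigr => k _; rewrite -scalerAr -exprS.
Qed.

Lemma eulerian_gf (R : nzRingType) n :
  \sum_(k < n.+1) (eulerian n.+1 k)%:R *: 'X^k
  = \sum_(s : 'S_n.+1) 'X ^+ perm_asc s :> {poly R}.
Proof.
apply: sum_card_scale_Xn => s.
by rewrite (leq_ltn_trans (consec_count_le _ _)) // size_map size_enum_ord.
Qed.

Section InversionSequenceStatistics.

Variables (R : comNzRingType) (x : R) (n : nat).

Lemma bn_lev : bn n x 1 1 = \sum_(v <- invseqs n) x ^+ consec_count eq_op v.
Proof.
by rewrite /bn -sum_is_inv_seq; apply: eq_bigr => rho _; rewrite !expr1n !mulr1.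
Qed.

Lemma bn_asc :
  bn n 1 1 x = \sum_(v <- invseqs n) x ^+ consec_count (fun a b => a < b)%N v.
Proof.
by rewrite /bn -sum_is_inv_seq; apply: eq_bigr => rho _; rewrite !expr1n !mul1r.
Qed.

Lemma bn_lev_des :
  bn n x x 1 = \sum_(v <- invseqs n) x ^+ consec_count (fun a b => b <= a)%N v.
Proof.
rewrite /bn -sum_is_inv_seq; apply: eq_bigr => rho _.
rewrite expr1n mulr1 -exprD /lev /des consec_countU => [|a b]; last first.
  by apply/negP => /andP[/eqP-> ]; rewrite ltnn.
congr (_ ^+ _); apply: eq_in_consec_count => a b _ _.
by rewrite [(b <= a)%N]leq_eqVlt eq_sym.
Qed.

End InversionSequenceStatistics.

Theorem theorem3p5 (n : nat) : (1 <= n)%N ->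
  bn n ('X : {poly int}) 1 1 = \sum_(k < n) (stirling1 n k.+1)%:R *: 'X^k
  /\ bn n (1 : {poly int}) 1 'X = \sum_(k < n) (eulerian n k)%:R *: 'X^k
  /\ bn n ('X : {poly int}) 'X 1 = \sum_(k < n) (eulerian n k)%:R *: 'X^k.
Proof.
case: n => // n _; split; [|split].
- by rewrite bn_lev level_gf stirling1S_gf.
- by rewrite bn_asc -perm_asc_gf eulerian_gf.
- by rewrite bn_lev_des -perm_des_gf -perm_asc_des_gf eulerian_gf.
Qed.
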